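(* Let $\beta$ be a totally positive quadratic integer with minimal polynomial $x^2 - Ex + C$, where $E, C \in \mathbb{Z}_{\geq 1}$. (i) If $C \geq 2E$, then $p_\beta(E\beta^2) \geq 4$. (ii) If $C \geq 2E - 3$, then $p_\beta(E\beta^3) \geq 5$. In particular, if $C \geq 2E - 3$, then it is not true that $p_\beta(E\beta^n) = n+1$ for every integer $n \geq 0$.
   Context: A quadratic integer is a root of a monic irreducible quadratic polynomial in $\mathbb{Z}[x]$; it is totally positive if both it and its conjugate are positive. For $\alpha \in \mathbb{C}$, $p_\beta(\alpha) \in \mathbb{Z}_{\geq 0}\cup\{\infty\}$ is the number of polynomials $f \in \mathbb{Z}_{\geq 0}[x]$ (non-negative integer coefficients) with $f(\beta) = \alpha$. Note $E = \beta + \beta'$ is the trace of $\beta$. *)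

From HB Require Import structures.
From mathcomp Require Import all_boot all_order all_algebra.
Set Implicit Arguments. Unset Strict Implicit. Unset Printing Implicit Defensive.
Import Order.TTheory GRing.Theory Num.Theory.
Local Open Scope ring_scope.

(* beta is a totally positive quadratic integer with minimal polynomial
   x^2 - E x + C: beta is a root of this monic integer polynomial, the
   polynomial is irreducible, and both beta and its conjugate
   beta' = E - beta are positive. *)
Definition min_poly_EC (E C : int) : {poly int} := 'X^2 - E%:P * 'X + C%:P.

Definition totally_pos_quad_int (R : realFieldType) (beta : R) (E C : int) : Prop :=
  [/\ irreducible_poly (min_poly_EC E C),
      (map_poly intr (min_poly_EC E C)).[beta] = 0,
      0 < beta & 0 < E%:~R - beta].

Definition is_rep (R : realFieldType) (beta alpha : R) (f : {poly int}) : Prop :=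
  (forall i, 0 <= f`_i) /\ (map_poly intr f).[beta] = alpha.

(* p_beta(alpha) = n  (n finite): the representations are exactly the
   elements of a duplicate-free list of length n. *)
Definition p_beta_eq (R : realFieldType) (beta alpha : R) (n : nat) : Prop :=
  exists s : seq {poly int},
    [/\ uniq s, size s = n & forall f, f \in s <-> is_rep beta alpha f].

Definition p_beta_ge (R : realFieldType) (beta alpha : R) (k : nat) : Prop :=
  exists s : seq {poly int},
    [/\ uniq s, size s = k & forall f, f \in s -> is_rep beta alpha f].

From HB Require Import structures.
From mathcomp Require Import all_boot all_order all_algebra.
From mathcomp Require Import zify ring.
Set Implicit Arguments. Unset Strict Implicit. Unset Printing Implicit Defensive.
Import Order.TTheory GRing.Theory Num.Theory.
Local Open Scope ring_scope.

(* Write m = X^2 - E X + C for the minimal polynomial of beta.  Every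
   polynomial E X^n + q m evaluates to E beta^n at beta, and distinct q give
   distinct polynomials, so it suffices to exhibit 4 quotients q (for n = 2)
   resp. 5 (for n = 3) for which E X^n + q m has non-negative coefficients.
   These coefficients are linear in E and C and are non-negative as soon as
   C >= 2E, resp. C >= 2E - 3 and E >= 6; in the second case E >= 7 is forced
   by the discriminant E^2 - 4C, which is non-negative because beta is real
   and non-zero because m is irreducible over Z.  Comparing 5 representations
   of E beta^3 with p_beta(E beta^3) = 4 gives the last claim. *)

Lemma coef_Poly_ge0 (p : {poly int}) (s : seq int) :
  p = Poly s -> all (fun a => 0 <= a) s -> forall i, 0 <= p`_i.
Proof.
move=> -> /allP s_ge0 i; rewrite coef_Poly.
have [i_lt|i_ge] := ltnP i (size s); first exact/s_ge0/mem_nth.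
by rewrite nth_default.
Qed.

Lemma sqr_not_irreducible (R : idomainType) (p : {poly R}) :
  (1 < size p)%N -> ~ irreducible_poly (p ^+ 2).
Proof.
move=> p_gt1 /apply_irredp /(_ p).
rewrite neq_ltn p_gt1 orbT expr2 dvdp_mulIl => /(_ isT isT) /eqp_size.
by move/(congr1 predn); rewrite -expr2 size_exp; lia.
Qed.

Lemma min_poly_EC_neq0 (E C : int) : min_poly_EC E C != 0.
Proof. by apply/eqP => /(congr1 (coefp 2)) /=; rewrite /min_poly_EC !coefE /=; lia. Qed.

Lemma min_poly_EC_sqr (k : int) : min_poly_EC (2 * k) (k * k) = ('X - k%:P) ^+ 2.
Proof. by rewrite /min_poly_EC; ring. Qed.

Lemma p_beta_eq_ge_leq (R : realFieldType) (beta alpha : R) (n k : nat) :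
  p_beta_eq beta alpha n -> p_beta_ge beta alpha k -> (k <= n)%N.
Proof.
move=> [t [_ <- t_reps]] [s [s_uniq <- s_reps]].
by apply: uniq_leq_size s_uniq _ => f /s_reps /t_reps.
Qed.

Section Discriminant.

Variables (R : realFieldType) (beta : R) (E C : int).
Hypothesis irreducible_m : irreducible_poly (min_poly_EC E C).
Hypothesis root_beta : (map_poly intr (min_poly_EC E C)).[beta] = 0.

Lemma min_poly_EC_disc_ge0 : 4 * C <= E * E.
Proof.
rewrite -subr_ge0 -(ler0z R).
have -> : ((E * E - 4 * C)%:~R : R) =
    (2 * beta - E%:~R) ^+ 2 - 4 * (map_poly intr (min_poly_EC E C)).[beta].
  by rewrite /min_poly_EC !rmorphD !rmorphN !rmorphM /= map_polyX !map_polyC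
             /= !hornerE; ring.
by rewrite root_beta mulr0 subr0 sqr_ge0.
Qed.

Lemma min_poly_EC_disc_gt0 : 4 * C < E * E.
Proof.
rewrite lt_neqAle min_poly_EC_disc_ge0 andbT; apply/eqP => sqrE.
have E_even : E = 2 * (E %/ 2)%Z by nia.
set k := (E %/ 2)%Z in E_even.
have C_sqr : C = k * k by move: sqrE; rewrite E_even; nia.
move: irreducible_m; rewrite E_even C_sqr min_poly_EC_sqr.
by apply: sqr_not_irreducible; rewrite size_XsubC.
Qed.

End Discriminant.

Lemma gt6_of_disc_gt0 (E C : int) :
  0 <= E -> 1 <= C -> 2 * E - 3 <= C -> 4 * C < E * E -> 6 < E.
Proof. nia. Qed.

Section Representations.

Variables (R : realFieldType) (beta : R) (E C : int).
Hypothesis root_beta : (map_poly intr (min_poly_EC E C)).[beta] = 0.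

Definition rep_of_quotient (n : nat) (q : {poly int}) : {poly int} :=
  E%:P * 'X^n + q * min_poly_EC E C.

Lemma horner_rep_of_quotient n q :
  (map_poly intr (rep_of_quotient n q)).[beta] = E%:~R * beta ^+ n.
Proof.
rewrite /rep_of_quotient rmorphD !rmorphM /= map_polyC map_polyXn /=.
by rewrite !hornerE root_beta mulr0 addr0.
Qed.

Lemma rep_of_quotient_inj n : injective (rep_of_quotient n).
Proof. by move=> q1 q2 /addrI /mulIf; apply; exact: min_poly_EC_neq0. Qed.

Lemma p_beta_ge_quotients n (qs : seq {poly int}) :
  uniq qs -> {in qs, forall q i, 0 <= (rep_of_quotient n q)`_i} ->
  p_beta_ge beta (E%:~R * beta ^+ n) (size qs).
Proof.
move=> qs_uniq qs_ge0; exists (map (rep_of_quotient n) qs); split.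
- by rewrite map_inj_uniq //; exact: rep_of_quotient_inj.
- exact: size_map.
- move=> f /mapP [q q_in ->]; split; first exact: qs_ge0.
  exact: horner_rep_of_quotient.
Qed.

Lemma p_beta_ge_E_beta2 : 1 <= E -> 2 * E <= C ->
  p_beta_ge beta (E%:~R * beta ^+ 2) 4.
Proof.
move=> E_ge1 C_ge.
apply: (p_beta_ge_quotients (qs := [:: 0; 'X; 'X + 1; 'X + 2])).
  by apply: (map_uniq (f := horner^~ 1)); rewrite /= !hornerE.
move=> q; rewrite !inE => /or4P [] /eqP ->;
  [ apply: (coef_Poly_ge0 (s := [:: 0; 0; E]))
  | apply: (coef_Poly_ge0 (s := [:: 0; C; 0; 1]))
  | apply: (coef_Poly_ge0 (s := [:: C; C - E; 1; 1]))
  | apply: (coef_Poly_ge0 (s := [:: 2 * C; C - 2 * E; 2; 1])) ].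
all: by [ rewrite /=; lia
        | rewrite /rep_of_quotient /min_poly_EC /Poly /= !cons_poly_def; ring ].
Qed.

Lemma p_beta_ge_E_beta3 : 6 <= E -> 2 * E - 3 <= C ->
  p_beta_ge beta (E%:~R * beta ^+ 3) 5.
Proof.
move=> E_ge6 C_ge.
apply: (p_beta_ge_quotients
  (qs := [:: 0; 'X^2; 'X^2 + 'X; 'X^2 + 'X + 1; 'X^2 + 2 * 'X + 3])).
  by apply: (map_uniq (f := horner^~ 1)); rewrite /= !hornerE.
move=> q; rewrite !inE => /orP [/eqP -> | /or4P [] /eqP ->];
  [ apply: (coef_Poly_ge0 (s := [:: 0; 0; 0; E]))
  | apply: (coef_Poly_ge0 (s := [:: 0; 0; C; 0; 1]))
  | apply: (coef_Poly_ge0 (s := [:: 0; C; C - E; 1; 1]))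
  | apply: (coef_Poly_ge0 (s := [:: C; C - E; C - E + 1; 1; 1]))
  | apply: (coef_Poly_ge0 (s := [:: 3 * C; 2 * C - 3 * E; C - 2 * E + 3; 2; 1])) ].
all: by [ rewrite /=; lia
        | rewrite /rep_of_quotient /min_poly_EC /Poly /= !cons_poly_def; ring ].
Qed.

End Representations.

Theorem proposition12 (R : realFieldType) (beta : R) (E C : int)
  (hE : 1 <= E) (hC : 1 <= C)
  (hbeta : totally_pos_quad_int beta E C) :
  [/\ (2 * E <= C -> p_beta_ge beta (E%:~R * beta ^+ 2) 4),
      (2 * E - 3 <= C -> p_beta_ge beta (E%:~R * beta ^+ 3) 5)
    & (2 * E - 3 <= C ->
       ~ (forall n : nat, p_beta_eq beta (E%:~R * beta ^+ n) n.+1))].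
Proof.
have [irreducible_m root_beta _ _] := hbeta.
have disc_gt0 := min_poly_EC_disc_gt0 irreducible_m root_beta.
have E_beta3 : 2 * E - 3 <= C -> p_beta_ge beta (E%:~R * beta ^+ 3) 5.
  move=> C_ge; apply: (p_beta_ge_E_beta3 root_beta _ C_ge); apply: ltW.
  by apply: (gt6_of_disc_gt0 _ hC C_ge disc_gt0); lia.
split => //; first exact: p_beta_ge_E_beta2.
by move=> /E_beta3 E_beta3_ge5 /(_ 3%N) /p_beta_eq_ge_leq /(_ E_beta3_ge5).
Qed.
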